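(* Let $n\ge2$, $l\ge1$, $\mathfrak g=A^{(2)}_{2n}$, $B$ the level-$l$ perfect crystal of the context, $\lambda=l\Lambda_0$, $d=2n$, and $i^{(j)}_a=a-1$ for $1\le a\le n+1$, $i^{(j)}_a=2n+1-a$ for $n+2\le a\le 2n$ (all $j\ge1$). Then: (II) $B^{(j)}_d=B$ for all $j\ge1$; (III) $\langle\lambda_j,h_{i^{(j)}_a}\rangle\le\varepsilon_{i^{(j)}_a}(b)$ for all $j\ge1$, $1\le a\le d$, $b\in B^{(j)}_{a-1}$; (IV') for all $j\ge1$, $a=1,\dots,d$: $\varepsilon_{i^{(j)}_{a+1}}(b^{(j)}_a)=0$, $\varphi_{i^{(j)}_{a+1}}(b^{(j)}_a)>0$ (with $i^{(j)}_{d+1}:=i^{(j+1)}_1$), and $b^{(j+1)}_0=\tilde f_{i^{(j+1)}_1}^mb^{(j)}_d$ with $m=\langle\lambda_{j+1},h_{i^{(j+1)}_1}\rangle$. Moreover $B^{(j)}_0=\{(0,\dots,0)\}$, $B^{(j)}_{2n}=B$; for $1\le a\le n$, $B^{(j)}_a$ is the set of $b\in B$ with all coordinates $0$ except possibly $x_1,\dots,x_a$; for $1\le a\le n-1$, $B^{(j)}_{n+a}$ is the set of $b\in B$ with all coordinates $0$ except possibly $x_1,\dots,x_n,\bar x_n,\dots,\bar x_{n-a+1}$. Also $b^{(j)}_0=(0,\dots,0)$, and for $1\le a\le n$, $b^{(j)}_a$ has $x_a=l$ and $b^{(j)}_{n+a}$ has $\bar x_{n-a+1}=l$, all other coordinates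 $0$.
   Context: $(x)_+=\max(x,0)$. $B=\{(x_1,\dots,x_n,\bar x_n,\dots,\bar x_1)\in\mathbb Z^{2n}: x_i,\bar x_i\ge0,\ \sum_{i=1}^n(x_i+\bar x_i)\le l\}$. Crystal structure: $\tilde f_0b=(x_1+1,x_2,\dots,\bar x_1)$ if $x_1\ge\bar x_1$, $(x_1,\dots,\bar x_2,\bar x_1-1)$ if $x_1<\bar x_1$; for $1\le i\le n-1$, $\tilde f_ib$ replaces $(x_i,x_{i+1})$ by $(x_i-1,x_{i+1}+1)$ if $x_{i+1}\ge\bar x_{i+1}$, and $(\bar x_{i+1},\bar x_i)$ by $(\bar x_{i+1}-1,\bar x_i+1)$ if $x_{i+1}<\bar x_{i+1}$; $\tilde f_nb$ replaces $(x_n,\bar x_n)$ by $(x_n-1,\bar x_n+1)$; $\tilde e_ib=b'$ iff $\tilde f_ib'=b$; results outside $B$ mean $0$. With $s(b)=\sum_{i=1}^n(x_i+\bar x_i)$: $\varphi_0(b)=l-s(b)+2(\bar x_1-x_1)_+$, $\varepsilon_0(b)=l-s(b)+2(x_1-\bar x_1)_+$; $\varphi_i(b)=x_i+(\bar x_{i+1}-x_{i+1})_+$, $\varepsilon_i(b)=\bar x_i+(x_{i+1}-\bar x_{i+1})_+$ ($1\le i\le n-1$); $\varphi_n(b)=x_n$, $\varepsilon_n(b)=\bar x_n$. For $\lambda=l\Lambda_0$: $\lambda_j=l\Lambda_0$ and $\overline b_j=(0,\dots,0)$ for all $j$; $\langle\lambda_j,h_i\rangle$ is the coefficient of $\Lambda_i$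 in $\lambda_j$. Given $d$, $i^{(j)}_a$: $B^{(j)}_0=\{\overline b_j\}$, $B^{(j)}_a=\bigcup_{n\ge0}\tilde f_{i^{(j)}_a}^nB^{(j)}_{a-1}\setminus\{0\}$; $b^{(j)}_0=\overline b_j$, $b^{(j)}_a=\tilde f_{i^{(j)}_a}^{\varphi_{i^{(j)}_a}(b^{(j)}_{a-1})}b^{(j)}_{a-1}$. *)

From mathcomp Require Import all_boot.
Set Implicit Arguments. Unset Strict Implicit. Unset Printing Implicit Defensive.

(* An element b = (x_1,...,x_n, xbar_n,...,xbar_1) is represented as a pair
   (xs, xbs) of sequences with x_i = nth 0 xs (i-1) and xbar_i = nth 0 xbs (i-1). *)
Definition elem := (seq nat * seq nat)%type.

Definition xc (b : elem) (i : nat) : nat := nth 0 b.1 i.-1.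
Definition xbc (b : elem) (i : nat) : nat := nth 0 b.2 i.-1.

Definition sB (b : elem) : nat := sumn b.1 + sumn b.2.

Definition inB (n l : nat) (b : elem) : bool :=
  [&& size b.1 == n, size b.2 == n & sB b <= l].

Definition setx (b : elem) (i v : nat) : elem := (set_nth 0 b.1 i.-1 v, b.2).
Definition setxb (b : elem) (i v : nat) : elem := (b.1, set_nth 0 b.2 i.-1 v).

(* Raw action of \tilde f_i (None when a coordinate would become negative). *)
Definition fraw (n : nat) (i : nat) (b : elem) : option elem :=
  if i == 0 then
    (if xbc b 1 <= xc b 1 then Some (setx b 1 (xc b 1).+1)
     else Some (setxb b 1 (xbc b 1).-1))
  else if i < n then
    (if xbc b i.+1 <= xc b i.+1 then
       (if xc b i == 0 then None
        else Some (setx (setx b i (xc b i).-1) i.+1 (xc b i.+1).+1))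
     else
       (if xbc b i.+1 == 0 then None
        else Some (setxb (setxb b i.+1 (xbc b i.+1).-1) i (xbc b i).+1)))
  else if i == n then
    (if xc b n == 0 then None
     else Some (setxb (setx b n (xc b n).-1) n (xbc b n).+1))
  else None.

(* \tilde f_i on B; None plays the role of 0 (results outside B). *)
Definition ftil (n l i : nat) (b : elem) : option elem :=
  match fraw n i b with
  | Some b' => if inB n l b' then Some b' else None
  | None => None
  end.

Definition fpow (n l i k : nat) (b : elem) : option elem :=
  iter k (fun ob => obind (ftil n l i) ob) (Some b).

(* varphi_i and epsilon_i (natural-number truncated subtraction: (x-y)_+ = x - y;
   l - s(b) >= 0 on B). *)
Definition phi (n l i : nat) (b : elem) : nat :=
  if i == 0 then l - sB b + 2 * (xbc b 1 - xc b 1)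
  else if i < n then xc b i + (xbc b i.+1 - xc b i.+1)
  else if i == n then xc b n else 0.

Definition eps (n l i : nat) (b : elem) : nat :=
  if i == 0 then l - sB b + 2 * (xc b 1 - xbc b 1)
  else if i < n then xbc b i + (xc b i.+1 - xbc b i.+1)
  else if i == n then xbc b n else 0.

Definition lamcoef (l i : nat) : nat := if i == 0 then l else 0.

Definition zeroB (n : nat) : elem := (nseq n 0, nseq n 0).

(* B^{(j)}_a, for the index sequence ii = (a |-> i^{(j)}_a) and start b0 = bbar_j *)
Fixpoint Bset (n l : nat) (ii : nat -> nat) (b0 : elem) (a : nat) (b : elem) : Prop :=
  match a with
  | 0 => b = b0
  | a'.+1 => exists b' k, Bset n l ii b0 a' b' /\ fpow n l (ii a'.+1) k b' = Some b
  end.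

(* b^{(j)}_a (None would mean 0) *)
Fixpoint bseqj (n l : nat) (ii : nat -> nat) (b0 : elem) (a : nat) : option elem :=
  match a with
  | 0 => Some b0
  | a'.+1 => obind (fun b => fpow n l (ii a'.+1) (phi n l (ii a'.+1) b) b)
                   (bseqj n l ii b0 a')
  end.

(* i^{(j)}_a for this theorem (independent of j) *)
Definition iseq (n : nat) (j a : nat) : nat :=
  if a <= n.+1 then a.-1 else (2 * n).+1 - a.

Definition unitx (n l a : nat) : elem := setx (zeroB n) a l.
Definition unitxb (n l a : nat) : elem := setxb (zeroB n) a l.

From mathcomp Require Import all_boot zify.
Set Implicit Arguments. Unset Strict Implicit. Unset Printing Implicit Defensive.

(* Each f_i with i > 0 moves one unit between two neighbouring coordinates of
   (x_1, ..., x_n, xbar_n, ..., xbar_1), and f_0 adds or removes a unit at x_1.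
   Hence B_a is cut out by which coordinates may be nonzero: after f_0, ..., f_(a-1)
   the mass sits on x_1, ..., x_a (a <= n), and f_n, f_(n-1), ..., f_1 then pour it
   into xbar_n, ..., xbar_1.  Such a set is closed under the next operator, which
   only touches coordinates it leaves free; conversely each element of B_(a+1) is
   reached by the next operator from an element of B_a, namely from the head of
   its i-string when i > 0.  The element b_a carries the whole mass l on one
   coordinate and is the head of an i_(a+1)-string of length l ending at b_(a+1). *)

Lemma elem_ext n (b b' : elem) :
  size b.1 = n -> size b.2 = n -> size b'.1 = n -> size b'.2 = n ->
  (forall k, 1 <= k <= n -> xc b k = xc b' k) ->
  (forall k, 1 <= k <= n -> xbc b k = xbc b' k) -> b = b'.
Proof.
case: b => s t; case: b' => s' t' /= s1 t1 s1' t1' ex exb; congr pair.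
  by apply: (eq_from_nth (x0 := 0)) => [|i lt_i]; [rewrite s1 s1'|apply: (ex i.+1); lia].
by apply: (eq_from_nth (x0 := 0)) => [|i lt_i]; [rewrite t1 t1'|apply: (exb i.+1); lia].
Qed.

Lemma xc_setx b i v k : 0 < i -> 0 < k ->
  xc (setx b i v) k = if k == i then v else xc b k.
Proof. by case: i k => [|i] [|k] //; rewrite /xc nth_set_nth. Qed.
Lemma xbc_setxb b i v k : 0 < i -> 0 < k ->
  xbc (setxb b i v) k = if k == i then v else xbc b k.
Proof. by case: i k => [|i] [|k] //; rewrite /xbc nth_set_nth. Qed.
Lemma xc_setxb b i v k : xc (setxb b i v) k = xc b k. Proof. by []. Qed.
Lemma xbc_setx b i v k : xbc (setx b i v) k = xbc b k. Proof. by []. Qed.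
Lemma size_setx b i v : size (setx b i v).1 = maxn i.-1.+1 (size b.1).
Proof. exact: size_set_nth. Qed.
Lemma size_setxb b i v : size (setxb b i v).2 = maxn i.-1.+1 (size b.2).
Proof. exact: size_set_nth. Qed.
Lemma size_setx_bar b i v : size (setx b i v).2 = size b.2. Proof. by []. Qed.
Lemma size_setxb_x b i v : size (setxb b i v).1 = size b.1. Proof. by []. Qed.

Lemma xc_zeroB n k : xc (zeroB n) k = 0.
Proof. by rewrite /xc nth_nseq if_same. Qed.
Lemma xbc_zeroB n k : xbc (zeroB n) k = 0.
Proof. by rewrite /xbc nth_nseq if_same. Qed.
Lemma sB_zeroB n : sB (zeroB n) = 0.
Proof. by rewrite /sB !sumn_nseq. Qed.
Lemma size_zeroB_x n : size (zeroB n).1 = n. Proof. exact: size_nseq. Qed.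
Lemma size_zeroB_bar n : size (zeroB n).2 = n. Proof. exact: size_nseq. Qed.

Lemma nth_le_sumn (s : seq nat) i : nth 0 s i <= sumn s.
Proof.
elim: s i => [|x s IH] [|i] //=; first exact: leq_addr.
by rewrite (leq_trans (IH i)) ?leq_addl.
Qed.

Lemma sB_setx b i v : sB (setx b i v) + xc b i = sB b + v.
Proof. by rewrite /sB /= sumn_set_nth0; have := nth_le_sumn b.1 i.-1; rewrite /xc; lia. Qed.
Lemma sB_setxb b i v : sB (setxb b i v) + xbc b i = sB b + v.
Proof. by rewrite /sB /= sumn_set_nth0; have := nth_le_sumn b.2 i.-1; rewrite /xbc; lia. Qed.

Lemma xc_le_sB b i : xc b i <= sB b.
Proof. exact: leq_trans (nth_le_sumn _ _) (leq_addr _ _). Qed.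

Lemma inBP n l b : reflect [/\ size b.1 = n, size b.2 = n & sB b <= l] (inB n l b).
Proof. by apply: (iffP and3P) => -[/eqP-> /eqP-> ->]. Qed.

Definition coordE := (xc_setxb, xbc_setx, size_setx, size_setxb, size_setx_bar,
  size_setxb_x, xc_zeroB, xbc_zeroB, sB_zeroB, size_zeroB_x, size_zeroB_bar).

Ltac split_inB :=
  repeat match goal with
  | H : is_true (inB ?n _ ?b) |- _ =>
      is_var b;
      lazymatch goal with
      | _ : size b.1 = n |- _ => fail
      | _ => case/inBP: (H) => ? ? ?
      end
  end.

Ltac add_new_fact H :=
  let T := type of H in
  lazymatch goal with _ : T |- _ => fail | _ => pose proof H end.

(* Sums are tracked through [sB_setx]/[sB_setxb], whose additive form avoids
   truncated subtraction. *)
Ltac add_sB_facts :=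
  repeat match goal with
  | |- context[sB (setx ?b ?i ?v)] => add_new_fact (sB_setx b i v)
  | |- context[sB (setxb ?b ?i ?v)] => add_new_fact (sB_setxb b i v)
  | _ : context[sB (setx ?b ?i ?v)] |- _ => add_new_fact (sB_setx b i v)
  | _ : context[sB (setxb ?b ?i ?v)] |- _ => add_new_fact (sB_setxb b i v)
  end.

Ltac decide_if c x y :=
  let E := fresh in
  first [ assert (E : c) by lia; rewrite (@ifT _ c x y E)
        | assert (E : c = false) by lia; rewrite (@ifF _ c x y E) ]; clear E.

Ltac case_ifs :=
  repeat match goal with
  | |- context[match ?c with true => ?x | false => ?y end] => decide_if c x y
  | |- context[if ?a == ?b then _ else _] => case: (a =P b) => [?|?]; try subst a
  | H : context[if ?a == ?b then _ else _] |- _ =>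
      move: H; case: (a =P b) => [?|?] H; try subst a
  end.

Ltac coords :=
  intros; split_inB; case_ifs; add_sB_facts;
  repeat match goal with
  | H : context[setx _ _ _] |- _ => move: H
  | H : context[setxb _ _ _] |- _ => move: H
  | H : context[zeroB _] |- _ => move: H
  end;
  repeat first [ rewrite xc_setx; [|lia|lia] | rewrite xbc_setxb; [|lia|lia]
               | progress rewrite ?coordE ];
  intros; case_ifs; try lia.

Section OneStep.
Variables (n l : nat) (b : elem).
Hypothesis b_in : inB n l b.

Lemma ftil0_x : 0 < n -> xbc b 1 <= xc b 1 -> sB b < l ->
  ftil n l 0 b = Some (setx b 1 (xc b 1).+1).
Proof.
by move=> n_gt0 reg lt_sl; rewrite /ftil /fraw /= reg ifT //; apply/inBP; split; coords.
Qed.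

Lemma ftil0_xb : 0 < n -> xc b 1 < xbc b 1 ->
  ftil n l 0 b = Some (setxb b 1 (xbc b 1).-1).
Proof.
by move=> n_gt0 reg; rewrite /ftil /fraw /= leqNgt reg ifT //; apply/inBP; split; coords.
Qed.

Lemma ftil_x i : 0 < i < n -> xbc b i.+1 <= xc b i.+1 -> 0 < xc b i ->
  ftil n l i b = Some (setx (setx b i (xc b i).-1) i.+1 (xc b i.+1).+1).
Proof.
move=> /andP[i_gt0 lt_in] reg x_gt0.
rewrite /ftil /fraw (gtn_eqF i_gt0) lt_in reg (gtn_eqF x_gt0) ifT //.
by apply/inBP; split; coords.
Qed.

Lemma ftil_xb i : 0 < i < n -> xc b i.+1 < xbc b i.+1 ->
  ftil n l i b = Some (setxb (setxb b i.+1 (xbc b i.+1).-1) i (xbc b i).+1).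
Proof.
move=> /andP[i_gt0 lt_in] reg.
have xb_gt0 : 0 < xbc b i.+1 by lia.
rewrite /ftil /fraw (gtn_eqF i_gt0) lt_in leqNgt reg /= (gtn_eqF xb_gt0) ifT //.
by apply/inBP; split; coords.
Qed.

Lemma ftil_last : 0 < n -> 0 < xc b n ->
  ftil n l n b = Some (setxb (setx b n (xc b n).-1) n (xbc b n).+1).
Proof.
move=> n_gt0 x_gt0.
rewrite /ftil /fraw (gtn_eqF n_gt0) ltnn eqxx (gtn_eqF x_gt0) ifT //.
by apply/inBP; split; coords.
Qed.

End OneStep.

Lemma fpowS n l i k b : fpow n l i k.+1 b = obind (ftil n l i) (fpow n l i k b).
Proof. by []. Qed.

Lemma fpow_add n l i k1 k2 b :
  fpow n l i (k1 + k2) b = obind (fpow n l i k2) (fpow n l i k1 b).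
Proof.
elim: k2 => [|k IH]; first by rewrite addn0; case: fpow.
by rewrite addnS fpowS IH; case: (fpow n l i k1 b).
Qed.

Lemma fpow_ind n l i (P : elem -> Prop) k b b' :
  (forall c c', P c -> ftil n l i c = Some c' -> P c') ->
  P b -> fpow n l i k b = Some b' -> P b'.
Proof.
move=> P_ftil Pb; elim: k b' => [|k IH] b'; first by case=> <-.
by rewrite fpowS; case E: fpow => [c|] //=; apply: P_ftil; apply: IH.
Qed.

Lemma ftil_inB n l i b b' : ftil n l i b = Some b' -> inB n l b'.
Proof. by rewrite /ftil; case: fraw => // c; case: ifP => // c_in [<-]. Qed.

Ltac string_rewrite n lem :=
  rewrite lem; [congr Some; apply: (@elem_ext n) | apply/inBP; split | ..]; coords.

Section Strings.
Variables (n l : nat) (b : elem).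
Hypotheses (b_in : inB n l b) (n_gt0 : 0 < n).

Ltac string_base := congr Some; apply: (@elem_ext n); coords.

Ltac string_step IH step := rewrite fpowS IH /=; [string_rewrite n step|..]; coords.

Lemma fpow0_x c : xbc b 1 <= xc b 1 -> sB b + c <= l ->
  fpow n l 0 c b = Some (setx b 1 (xc b 1 + c)).
Proof.
move=> reg; elim: c => [|c IH] le_cl; first by string_base.
string_step IH ftil0_x.
Qed.

Lemma fpow0_xb c : xc b 1 + c <= xbc b 1 ->
  fpow n l 0 c b = Some (setxb b 1 (xbc b 1 - c)).
Proof.
elim: c => [|c IH] reg; first by string_base.
string_step IH ftil0_xb.
Qed.

Lemma fpow_x i c : 0 < i < n -> (0 < c -> xbc b i.+1 <= xc b i.+1) -> c <= xc b i ->
  fpow n l i c b = Some (setx (setx b i (xc b i - c)) i.+1 (xc b i.+1 + c)).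
Proof.
move=> i_range; elim: c => [|c IH] reg le_cx; first by string_base.
have reg' := reg isT; string_step IH ftil_x.
Qed.

Lemma fpow_xb i c : 0 < i < n -> xc b i.+1 + c <= xbc b i.+1 ->
  fpow n l i c b = Some (setxb (setxb b i.+1 (xbc b i.+1 - c)) i (xbc b i + c)).
Proof.
move=> i_range; elim: c => [|c IH] reg; first by string_base.
string_step IH ftil_xb.
Qed.

Lemma fpow_last c : c <= xc b n ->
  fpow n l n c b = Some (setxb (setx b n (xc b n - c)) n (xbc b n + c)).
Proof.
elim: c => [|c IH] le_cx; first by string_base.
string_step IH ftil_last.
Qed.

End Strings.

Lemma ftil_frame n l i b b' k : 0 < k -> k != i -> k != i.+1 -> ftil n l i b = Some b' ->
  xc b' k = xc b k /\ xbc b' k = xbc b k.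
Proof.
rewrite /ftil /fraw => k_gt0 ne_i ne_i1.
by repeat (case: ifP => ? //); case=> <-; split; coords.
Qed.

Lemma ftil_bar_fixed n l i b b' : i < n -> xbc b i.+1 = 0 -> ftil n l i b = Some b' ->
  b'.2 = b.2.
Proof.
move=> lt_in xb0; rewrite /ftil /fraw lt_in.
case: (i =P 0) => [i0|_]; first subst i.
all: by rewrite xb0 leq0n; repeat (case: ifP => ? //); case=> <-.
Qed.

Section StringHeads.
Variables (n l : nat) (b : elem).
Hypotheses (b_in : inB n l b) (n_gt0 : 0 < n).

Lemma fpow0_from_x1 : xbc b 1 = 0 -> fpow n l 0 (xc b 1) (setx b 1 0) = Some b.
Proof.
by move=> xb0; have x_le := xc_le_sB b 1; string_rewrite n fpow0_x.
Qed.

(* The head e_i^(eps_i b) b of the i-string through b, for 0 < i <= n. *)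
Definition string_head i : elem :=
  if i < n then
    let p := xc b i.+1 in let q := xbc b i.+1 in
    setxb (setxb (setx (setx b i (xc b i + (p - q))) i.+1 (minn p q)) i.+1 (q + xbc b i)) i 0
  else setxb (setx b n (xc b n + xbc b n)) n 0.

Lemma string_head_inB i : 0 < i <= n -> inB n l (string_head i).
Proof.
by rewrite /string_head => i_range; case: ifP => lt_in; apply/inBP; split; coords.
Qed.

Lemma fpow_string_head i : 0 < i <= n -> fpow n l i (eps n l i b) (string_head i) = Some b.
Proof.
move=> i_range; have := string_head_inB i_range.
rewrite /eps (gtn_eqF (proj1 (andP i_range))) /string_head.
case: ifP => [lt_in|ge_in] head_in; last first.
  have -> : i = n by lia.
  by rewrite eqxx; string_rewrite n fpow_last.
set p := xc b i.+1; set q := xbc b i.+1.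
(* f_i first moves xbar_i units from xbar_(i+1) back to xbar_i, then the
   surplus p - q from x_i to x_(i+1). *)
pose mid := setx (setx b i (xc b i + (p - q))) i.+1 (minn p q).
rewrite fpow_add fpow_xb //=; [|lia|coords].
rewrite [X in fpow _ _ _ _ X](_ : _ = mid); last by apply: (@elem_ext n); coords.
by rewrite /mid; string_rewrite n fpow_x.
Qed.

End StringHeads.

Lemma iseq_succ n j a : iseq n j a.+1 = if a < n then a else 2 * n - a.
Proof. by rewrite /iseq ltnS; case: ltngtP => //= ->; rewrite mul2n -addnn addnK. Qed.

Definition stage n l a b : Prop :=
  inB n l b /\ (forall k, a < k <= n -> xc b k = 0) /\
  (forall k, 1 <= k <= n - (a - n) -> xbc b k = 0).

Section Stages.
Variables (n l j : nat).
Hypothesis n_gt0 : 0 < n.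

Lemma stage0 b : stage n l 0 b <-> b = zeroB n.
Proof.
split=> [[b_in [x0 xb0]]|->].
  by apply: (@elem_ext n) => [||||k k_range|k k_range]; coords; [apply: x0|apply: xb0]; lia.
by split; [apply/inBP; split|split]; coords.
Qed.

Lemma stage_succ a b : stage n l a b -> stage n l a.+1 b.
Proof.
by case=> b_in [x0 xb0]; split=> //; split=> k k_range; [apply: x0|apply: xb0]; lia.
Qed.

Lemma stage_ftil a c c' : a < 2 * n -> stage n l a.+1 c ->
  ftil n l (iseq n j a.+1) c = Some c' -> stage n l a.+1 c'.
Proof.
rewrite iseq_succ => lt_a [c_in [x0 xb0]] fc; split; first exact: ftil_inB fc.
case: ifP fc => [lt_an|ge_an] fc.
  have bar_eq : c'.2 = c.2 by apply: ftil_bar_fixed fc => //; apply: xb0; lia.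
  split=> k k_range; last by rewrite /xbc bar_eq; apply: xb0.
  by rewrite (ftil_frame _ _ _ fc).1 ?x0 //; lia.
split=> k k_range; first lia.
by rewrite (ftil_frame _ _ _ fc).2 ?xb0 //; lia.
Qed.

Lemma stage_reach a b : a < 2 * n -> stage n l a.+1 b ->
  exists b' k, stage n l a b' /\ fpow n l (iseq n j a.+1) k b' = Some b.
Proof.
move=> lt_a [b_in [x0 xb0]].
case: (a =P 0) => [a0|a_ne0].
  subst a; exists (setx b 1 0), (xc b 1); split.
    by split; [apply/inBP; split|split]; coords; [apply: x0|apply: xb0]; lia.
  by apply: fpow0_from_x1 => //; apply: xb0; lia.
set i := iseq n j a.+1; have i_range : 0 < i <= n by rewrite /i iseq_succ; case: ifP; lia.
exists (string_head n b i), (eps n l i b); split; last exact: fpow_string_head.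
split; first exact: string_head_inB.
move: i_range; rewrite /string_head /i iseq_succ.
case: ifP => [lt_an|ge_an] i_range.
  have xb_a : xbc b a = 0 by apply: xb0; lia.
  have xb_a1 : xbc b a.+1 = 0 by apply: xb0; lia.
  by rewrite lt_an; split; coords; [apply: x0|apply: xb0]; lia.
by case: ifP => ?; split; coords; apply: xb0; lia.
Qed.

Lemma Bset_stage a b : a <= 2 * n ->
  Bset n l (iseq n j) (zeroB n) a b <-> stage n l a b.
Proof.
elim: a b => [|a IH] b le_a; first by rewrite stage0.
split=> [[b' [k [b'_in fb']]]|b_st].
  apply: (fpow_ind (P := stage n l a.+1)) fb'; first by move=> c c'; apply: stage_ftil; lia.
  by apply/stage_succ/IH => //; lia.
have [b' [k [b'_st fb']]] := stage_reach le_a b_st.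
by exists b', k; split=> //; apply/IH => //; lia.
Qed.

End Stages.

Definition bseq_val n l a : elem :=
  if a == 0 then zeroB n else if a <= n then unitx n l a else unitxb n l (2 * n - a).+1.

Section Path.
Variables (n l j : nat).
Hypothesis n_gt0 : 0 < n.

Lemma phi_bseq_val a : a < 2 * n -> phi n l (iseq n j a.+1) (bseq_val n l a) = l.
Proof.
by rewrite iseq_succ /phi /bseq_val /unitx /unitxb => lt_a; case: ltnP => ?; coords.
Qed.

Lemma eps_bseq_val a : 0 < a < 2 * n -> eps n l (iseq n j a.+1) (bseq_val n l a) = 0.
Proof.
by rewrite iseq_succ /eps /bseq_val /unitx /unitxb => a_range; case: ltnP => ?; coords.
Qed.

Lemma fpow_bseq_val a : a < 2 * n ->
  fpow n l (iseq n j a.+1) l (bseq_val n l a) = Some (bseq_val n l a.+1).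
Proof.
rewrite iseq_succ /bseq_val /unitx /unitxb => lt_a.
case: (posnP a) => [->|a_gt0]; [|case: (ltngtP a n) => [lt_an|gt_an|->]]; case_ifs.
- string_rewrite n fpow0_x.
- string_rewrite n fpow_x.
- string_rewrite n fpow_xb.
- rewrite (_ : 2 * n - n = n); last lia; string_rewrite n fpow_last.
Qed.

Lemma bseqj_val a : a <= 2 * n -> bseqj n l (iseq n j) (zeroB n) a = Some (bseq_val n l a).
Proof.
elim: a => [|a IH] le_a //=.
by rewrite IH /= ?phi_bseq_val ?fpow_bseq_val //; lia.
Qed.

Lemma bseq_val_last : bseq_val n l (2 * n) = unitxb n l 1.
Proof. by rewrite /bseq_val; case_ifs; rewrite subnn. Qed.

Lemma fpow_bseq_val_last : fpow n l 0 l (bseq_val n l (2 * n)) = Some (zeroB n).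
Proof.
by rewrite bseq_val_last /unitxb; string_rewrite n fpow0_xb.
Qed.

End Path.

Section Theorem6.
Variables (n l j : nat).
Hypotheses (n_gt0 : 0 < n) (l_gt0 : 0 < l).

Lemma Bset_full b : Bset n l (iseq n j) (zeroB n) (2 * n) b <-> inB n l b.
Proof.
rewrite Bset_stage //; split=> [[]//|b_in].
by split=> //; split=> k k_range; lia.
Qed.

Lemma Bset_low a : a <= n -> forall b,
  Bset n l (iseq n j) (zeroB n) a b <->
  inB n l b /\ (forall k, a < k <= n -> xc b k = 0) /\ (forall k, 1 <= k <= n -> xbc b k = 0).
Proof.
move=> le_an b; rewrite Bset_stage /stage //; last lia.
have -> : n - (a - n) = n by lia.
exact: iff_refl.
Qed.

Lemma Bset_high a : a <= n -> forall b,
  Bset n l (iseq n j) (zeroB n) (n + a) b <->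
  inB n l b /\ (forall k, 1 <= k <= n - a -> xbc b k = 0).
Proof.
move=> le_an b; rewrite Bset_stage /stage //; last lia.
have -> : n - (n + a - n) = n - a by lia.
by split=> [[? [_ ?]]|[? ?]]; do ?split=> //; lia.
Qed.

Lemma lamcoef_le_eps a : 1 <= a <= 2 * n -> forall b, Bset n l (iseq n j) (zeroB n) a.-1 b ->
  lamcoef l (iseq n j a) <= eps n l (iseq n j a) b.
Proof.
case: a => [|[|a]] // a_range b.
  by move=> /= ->; rewrite iseq_succ /lamcoef /eps; coords.
by move=> _; rewrite /lamcoef iseq_succ; case: ltnP => ?; case_ifs.
Qed.

Lemma bseqj_string a : 1 <= a <= 2 * n ->
  exists b, bseqj n l (iseq n j) (zeroB n) a = Some b /\
    eps n l (if a < 2 * n then iseq n j a.+1 else iseq n j.+1 1) b = 0 /\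
    0 < phi n l (if a < 2 * n then iseq n j a.+1 else iseq n j.+1 1) b.
Proof.
move=> a_range; exists (bseq_val n l a); split; first by apply: bseqj_val; lia.
case: ltnP => [lt_a|ge_a].
  by rewrite eps_bseq_val ?phi_bseq_val //; lia.
have -> : a = 2 * n by lia.
by rewrite bseq_val_last // /eps /phi /unitxb /=; split; coords.
Qed.

Lemma bseqj_next :
  bseqj n l (iseq n j.+1) (zeroB n) 0 =
  obind (fpow n l (iseq n j.+1 1) (lamcoef l (iseq n j.+1 1)))
    (bseqj n l (iseq n j) (zeroB n) (2 * n)).
Proof. by rewrite !bseqj_val // iseq_succ n_gt0 /lamcoef /= fpow_bseq_val_last. Qed.

Lemma bseqj_low a : 1 <= a <= n -> bseqj n l (iseq n j) (zeroB n) a = Some (unitx n l a).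
Proof. by move=> a_range; rewrite bseqj_val //; [rewrite /bseq_val; case_ifs | lia]. Qed.

Lemma bseqj_high a : 1 <= a <= n ->
  bseqj n l (iseq n j) (zeroB n) (n + a) = Some (unitxb n l (n - a).+1).
Proof.
move=> a_range; rewrite bseqj_val //; last lia.
by rewrite /bseq_val; case_ifs; have -> : 2 * n - (n + a) = n - a by lia.
Qed.

End Theorem6.

Unset Implicit Arguments.
Theorem mainTheorem6 (n l : nat) (hn : 2 <= n) (hl : 1 <= l) :
  let d := 2 * n in
  let ii := iseq n in
  let lam := fun (j i : nat) => lamcoef l i in
  let bbar := fun (j : nat) => zeroB n in
  let Bs := fun j a b => Bset n l (ii j) (bbar j) a b in
  let bs := fun j a => bseqj n l (ii j) (bbar j) a in
  let inext := fun j a => if a < d then ii j a.+1 else ii j.+1 1 in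
  (* (II) *)
  (forall j, 1 <= j -> forall b, Bs j d b <-> inB n l b) /\
  (* (III) *)
  (forall j, 1 <= j -> forall a, 1 <= a <= d -> forall b, Bs j a.-1 b ->
     lam j (ii j a) <= eps n l (ii j a) b) /\
  (* (IV') *)
  (forall j, 1 <= j -> forall a, 1 <= a <= d ->
     exists b, bs j a = Some b /\
       eps n l (inext j a) b = 0 /\ 0 < phi n l (inext j a) b) /\
  (forall j, 1 <= j ->
     bs j.+1 0 = obind (fpow n l (ii j.+1 1) (lam j.+1 (ii j.+1 1))) (bs j d)) /\
  (* explicit description of the B^{(j)}_a *)
  (forall j, 1 <= j -> forall b, Bs j 0 b <-> b = zeroB n) /\
  (forall j, 1 <= j -> forall a, 1 <= a <= n -> forall b,
     Bs j a b <-> (inB n l b /\ (forall k, a < k <= n -> xc b k = 0) /\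
                   (forall k, 1 <= k <= n -> xbc b k = 0))) /\
  (forall j, 1 <= j -> forall a, 1 <= a <= n.-1 -> forall b,
     Bs j (n + a) b <-> (inB n l b /\ (forall k, 1 <= k <= n - a -> xbc b k = 0))) /\
  (* explicit description of the b^{(j)}_a *)
  (forall j, 1 <= j -> bs j 0 = Some (zeroB n)) /\
  (forall j, 1 <= j -> forall a, 1 <= a <= n -> bs j a = Some (unitx n l a)) /\
  (forall j, 1 <= j -> forall a, 1 <= a <= n ->
     bs j (n + a) = Some (unitxb n l (n - a).+1)).
Proof.
have n_gt0 : 0 < n by lia.
cbv zeta beta.
split; first by move=> j _; apply: Bset_full.
split; first by move=> j _; apply: lamcoef_le_eps.
split; first by move=> j _; apply: bseqj_string.
split; first by move=> j _; apply: bseqj_next.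
split; first by [].
split; first by move=> j _ a /andP[_ le_an]; apply: Bset_low.
split; first by move=> j _ a /andP[_ le_an]; apply: Bset_high; lia.
split; first by [].
split; first by move=> j _; apply: bseqj_low.
by move=> j _; apply: bseqj_high.
Qed.
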